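(* For the English Walrasian mechanism with valuation space $\mathcal{V}=\textsc{Gs}$ and bidding space $\mathcal{B}=\textsc{Gs}$, the Price of Stability is $1$; that is, for every profile $\mathbf{v}\in\textsc{Gs}^n$ of true valuations there exists a pure Nash equilibrium $\mathbf{b}$ with $\sum_i v_i(\mathbf{x}_i(\mathbf{b}))=\max\{\sum_i v_i(\mathbf{y}_i):(\mathbf{y}_i)_i \text{ a partition of the items}\}$.
   Context: There are $m$ items and $n$ agents. A valuation is $v:\{0,1\}^m\to\mathbb{R}_+$ with $v(\mathbf{0})=0$, monotone; extended to $\mathbb{Z}^m_+$ by $v(\mathbf{x})=v(\min(\mathbf{x},\mathbf{1}))$. Demand at prices $\mathbf{p}$: $D_v(\mathbf{p})=\arg\max_{\mathbf{x}\in\{0,1\}^m}[v(\mathbf{x})-\mathbf{p}\cdot\mathbf{x}]$. $v\in\textsc{Gs}$ (gross substitutes) if for all prices $\mathbf{p}\le\mathbf{q}$, $S=\{j:p_j=q_j\}$, and $\mathbf{x}\in D_v(\mathbf{p})$, there is $\mathbf{y}\in D_v(\mathbf{q})$ with $y_j\ge x_j$ for all $j\in S$. For declared $\mathbf{b}=(b_1,\dots,b_n)$, $W^{\mathbf{b}}(\mathbf{x})=\max\{\sum_i b_i(\mathbf{x}_i):\sum_i\mathbf{x}_i\le\mathbf{x},\mathbf{x}_i\in\{0,1\}^m\}$ for $\mathbf{x}\in\mathbb{Z}^m_+$, and $f(\mathbf{y}\mid\mathbf{x})=f(\mathbf{y}+\mathbf{x})-f(\mathbf{x})$. English Walrasian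 mechanism: agents report $b_i\in\mathcal{B}$; allocation is a partition maximizing $\sum_i b_i(\mathbf{x}_i)$; payment $\pi_i(\mathbf{b})=\sum_{j: x_{ij}(\mathbf{b})=1}W^{\mathbf{b}}(\mathbf{1}_j\mid\mathbf{1})$. Utility $u_i(v_i;\mathbf{b})=v_i(\mathbf{x}_i(\mathbf{b}))-\pi_i(\mathbf{b})$. Pure Nash equilibrium: no agent can increase his utility by unilaterally changing his report within $\mathcal{B}$. The Price of Stability is $\max_{\mathbf{v}}\min_{\mathbf{b}\in\textsc{Nash}(\mathbf{v})}\frac{\sum_i v_i(\mathbf{x}^*_i(\mathbf{v}))}{\sum_i v_i(\mathbf{x}_i(\mathbf{b}))}$ where $\mathbf{x}^*(\mathbf{v})$ is a welfare-maximizing partition (taken to be $1$ if no Nash equilibrium exists). *)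

From mathcomp Require Import all_boot all_order all_algebra.
From mathcomp Require Import reals.
Set Implicit Arguments. Unset Strict Implicit. Unset Printing Implicit Defensive.
Import Order.TTheory GRing.Theory Num.Theory.
Local Open Scope ring_scope.

Section EW.
Variables (R : realType) (m n : nat).

(* A bundle x in {0,1}^m is a subset of the items 'I_m. *)
Definition valuation := {set 'I_m} -> R.
Definition profile := 'I_n -> valuation.

Definition is_valuation (v : valuation) : Prop :=
  v set0 = 0 /\ (forall S : {set 'I_m}, 0 <= v S) /\ (forall S T : {set 'I_m}, S \subset T -> v S <= v T).

Definition cost (p : 'I_m -> R) (S : {set 'I_m}) : R := \sum_(j in S) p j.

Definition in_demand (v : valuation) (p : 'I_m -> R) (S : {set 'I_m}) : Prop :=
  forall T : {set 'I_m}, v T - cost p T <= v S - cost p S.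

Definition GS (v : valuation) : Prop :=
  is_valuation v /\
  forall (p q : 'I_m -> R), (forall j, p j <= q j) ->
  forall X : {set 'I_m}, in_demand v p X ->
  exists Y, in_demand v q Y /\
            (forall j, p j = q j -> j \in X -> j \in Y).

(* W^b(x) for a multiplicity vector x in Z_+^m: each agent receives a 0/1
   bundle, and item j is handed out at most x_j times in total. *)
Definition feasible_mult (x : 'I_m -> nat) (f : {ffun 'I_n -> {set 'I_m}}) : bool :=
  [forall j, #|[set i | j \in f i]| <= x j]%N.

Definition W (b : profile) (x : 'I_m -> nat) : R :=
  \big[Num.max/ \sum_i b i set0]_(f | feasible_mult x f) \sum_i b i (f i).

Definition ones : 'I_m -> nat := fun _ => 1%N.
Definition ones_plus (j : 'I_m) : 'I_m -> nat := fun k => if k == j then 2%N else 1%N.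

Definition marg (b : profile) (j : 'I_m) : R := W b (ones_plus j) - W b ones.

Definition assignment := {ffun 'I_m -> 'I_n}.
Definition bundle (a : assignment) (i : 'I_n) : {set 'I_m} := [set j | a j == i].
Definition welfare (v : profile) (a : assignment) : R := \sum_i v i (bundle a i).

Definition maximizing_rule (alloc : profile -> assignment) : Prop :=
  forall b : profile, (forall i, GS (b i)) ->
  forall a, welfare b a <= welfare b (alloc b).

Definition payment (alloc : profile -> assignment) (b : profile) (i : 'I_n) : R :=
  \sum_(j | alloc b j == i) marg b j.

Definition utility (alloc : profile -> assignment) (vi : valuation) (b : profile) (i : 'I_n) : R :=
  vi (bundle (alloc b) i) - payment alloc b i.

Definition upd (b : profile) (i : 'I_n) (bi : valuation) : profile :=
  fun k => if k == i then bi else b k.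

Definition Nash (alloc : profile -> assignment) (v : profile) (b : profile) : Prop :=
  (forall i, GS (b i)) /\
  forall i (bi : valuation), GS bi ->
    utility alloc (v i) (upd b i bi) i <= utility alloc (v i) b i.

End EW.

From mathcomp Require Import all_boot all_order all_algebra.
From mathcomp Require Import reals.
From mathcomp Require Import lra.
Import Order.TTheory GRing.Theory Num.Theory.
Local Open Scope ring_scope.

(* Fix a welfare-maximizing assignment a* and a constant c exceeding every
   value of every agent.  Let each agent bid the additive valuation worth c on
   each item a* gives him and 0 on the others.  Then a* is the unique optimum
   for these bids, a second copy of any item adds no bid-welfare, so all
   payments vanish and agent i gets v_i(a*_i).  A deviation that only shrinks
   i's bundle cannot help by monotonicity; a deviation winning an item j of
   another agent k costs at least the marginal value of j for k, which is c,
   more than anything i can gain. *)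

Section EnglishWalrasian.
Context {R : realType} {m n : nat}.
Implicit Types (b v : profile R m n) (a : assignment m n).

Lemma le_W b x f : feasible_mult x f -> \sum_i b i (f i) <= W b x.
Proof. by move=> feas_f; apply: le_bigmax_cond. Qed.
Arguments le_W b {x f}.

Lemma W_le b x y : \sum_i b i set0 <= y ->
  (forall f, feasible_mult x f -> \sum_i b i (f i) <= y) -> W b x <= y.
Proof. by move=> le0 le_f; apply/bigmax_leP. Qed.

Lemma feasible_ones_plus j (f : {ffun 'I_n -> {set 'I_m}}) :
  feasible_mult (@ones m) f -> feasible_mult (ones_plus j) f.
Proof.
move=> /forallP feas_f; apply/forallP => k; apply: leq_trans (feas_f k) _.
by rewrite /ones /ones_plus; case: ifP.
Qed.

Lemma feasible_set0 x : feasible_mult x [ffun _ : 'I_n => (set0 : {set 'I_m})].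
Proof.
apply/forallP => k; apply: leq_trans (leq0n (x k)); rewrite leqn0 cards_eq0.
by apply/eqP/setP => i; rewrite !inE ffunE inE.
Qed.

Lemma sum_set0_le_W b x : \sum_i b i set0 <= W b x.
Proof.
have := le_W b (feasible_set0 x); by under eq_bigr do rewrite ffunE.
Qed.

Lemma marg_ge0 b j : 0 <= marg b j.
Proof.
rewrite subr_ge0; apply: W_le; first exact: sum_set0_le_W.
by move=> f /(feasible_ones_plus j); apply: le_W.
Qed.

Lemma payment_ge0 alloc b i : 0 <= payment alloc b i.
Proof. by apply: sumr_ge0 => j _; apply: marg_ge0. Qed.

Lemma sum_over_bundles (g : 'I_n -> 'I_m -> R) a :
  \sum_l \sum_(j in bundle a l) g l j = \sum_j g (a j) j.
Proof.
rewrite (partition_big a xpredT) //=; apply: eq_bigr => l _.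
by apply: eq_big => j; rewrite inE // => /eqP->.
Qed.

Lemma welfare_le_W_ones b a : welfare b a <= W b (@ones m).
Proof.
have feas_a : feasible_mult (@ones m) [ffun l => bundle a l].
  apply/forallP => j; rewrite /ones -(cards1 (a j)) subset_leq_card //.
  by apply/subsetP => i; rewrite !inE ffunE inE eq_sym.
have := le_W b feas_a; by under eq_bigr do rewrite ffunE.
Qed.

(* A feasible family for multiplicity 1 is dominated by any assignment that
   extends it, by monotonicity of the bids. *)
Lemma W_ones_le_welfare b a0 y : (forall l, is_valuation (b l)) ->
  (forall a, welfare b a <= y) -> W b (@ones m) <= y.
Proof.
move=> val_b le_y.
suff le_f : forall f, feasible_mult (@ones m) f -> \sum_i b i (f i) <= y.
  apply: W_le (le_f); have := le_f _ (feasible_set0 (@ones m)).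
  by under eq_bigr do rewrite ffunE.
move=> f /forallP feas_f.
pose a : assignment m n := [ffun j => odflt (a0 j) [pick l | j \in f l]].
apply: le_trans (le_y a); apply: ler_sum => l _.
have [_ [_ mono]] := val_b l; apply: mono; apply/subsetP => j fl_j.
rewrite inE ffunE; case: pickP => [l' fl'_j|/(_ l)]; last by rewrite fl_j.
have /card_le1_eqP eq_holders := feas_f j.
by apply/eqP; apply: eq_holders; rewrite inE.
Qed.

(* Handing a second copy of j0 to an agent k who does not hold it in an
   optimal assignment is feasible for the multiplicity vector 1 + 1_j0. *)
Lemma marg_ge_gain b a j0 k : (forall l, is_valuation (b l)) ->
  (forall a', welfare b a' <= welfare b a) -> a j0 != k ->
  b k (j0 |: bundle a k) - b k (bundle a k) <= marg b j0.
Proof.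
move=> val_b opt_a k_out.
pose f := [ffun l => if l == k then j0 |: bundle a l else bundle a l].
have feas_f : feasible_mult (ones_plus j0) f.
  apply/forallP => j; rewrite /ones_plus; case: eqP => [->|/eqP ne_j].
    apply: leq_trans (_ : #|[set a j0; k]| <= 2)%N; last first.
      by rewrite cards2; case: (_ != _).
    apply/subset_leq_card/subsetP => l; rewrite !inE ffunE.
    by case: eqP => [->|_]; rewrite ?eqxx ?orbT // inE eq_sym orbF.
  apply: leq_trans (_ : #|[set a j]| <= 1)%N; last by rewrite cards1.
  apply/subset_leq_card/subsetP => l; rewrite !inE ffunE.
  by case: eqP => _; rewrite ?inE ?(negbTE ne_j) //= eq_sym.
have <- : \sum_i b i (f i) - welfare b a =
          b k (j0 |: bundle a k) - b k (bundle a k).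
  rewrite /welfare (bigD1 k) //= [X in _ - X](bigD1 k) //= ffunE eqxx.
  rewrite (eq_bigr (fun i => b i (bundle a i))) => [|i /negbTE ne_i].
    by rewrite opprD addrACA subrr addr0.
  by rewrite ffunE ne_i.
by apply: lerB; [apply: le_W | apply: W_ones_le_welfare].
Qed.
Arguments marg_ge_gain {b a j0 k}.

Definition additive (w : 'I_m -> R) : valuation R m := fun S => \sum_(j in S) w j.

Lemma additive_sub_cost (w p : 'I_m -> R) S :
  additive w S - cost p S = \sum_(j in S) (w j - p j).
Proof. by rewrite /additive /cost sumrB. Qed.

Lemma additive_setU1 (w : 'I_m -> R) j (S : {set 'I_m}) :
  j \notin S -> additive w (j |: S) - additive w S = w j.
Proof. by move=> S'j; rewrite /additive big_setU1 //= addrK. Qed.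

Lemma is_valuation_additive (w : 'I_m -> R) : (forall j, 0 <= w j) ->
  is_valuation (additive w).
Proof.
move=> w_ge0; split; first by rewrite /additive big_set0.
split=> [S|S T /subsetP sST]; first exact: sumr_ge0.
rewrite /additive [X in X <= _]big_mkcond [X in _ <= X]big_mkcond.
by apply: ler_sum => j _; case: ifP => [/sST ->|_] //; case: ifP.
Qed.

(* At prices q the bundle of items with w j >= q j is demanded; it keeps every
   item whose price did not rise, since such an item was worth its price. *)
Lemma GS_additive (w : 'I_m -> R) : (forall j, 0 <= w j) -> GS (additive w).
Proof.
move=> w_ge0; split; first exact: is_valuation_additive.
move=> p q _ X dem_X; exists [set j | 0 <= w j - q j]; split.
  move=> T; rewrite !additive_sub_cost [X in X <= _]big_mkcond.
  rewrite [X in _ <= X]big_mkcond; apply: ler_sum => j _; rewrite inE.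
  by case: ifP => _; case: ifP => // /negbT; rewrite -ltNge => /ltW.
move=> j eq_pq Xj; rewrite inE -eq_pq.
have := dem_X (X :\ j); rewrite !additive_sub_cost (bigD1 j Xj) /=.
rewrite (eq_bigl (fun i => (i \in X) && (i != j))) ?lerDr // => i.
by rewrite !inE andbC.
Qed.

Lemma GS_upd b i bi : (forall l, GS (b l)) -> GS bi -> forall l, GS (upd b i bi l).
Proof. by move=> GS_b GS_bi l; rewrite /upd; case: ifP. Qed.
Arguments GS_upd {b i bi}.

Lemma exists_welfare_max v a0 : exists astar, forall a, welfare v a <= welfare v astar.
Proof.
have [astar _ max_astar] := @arg_maxP _ _ _ a0 xpredT (welfare v) isT.
by exists astar => a; apply: max_astar.
Qed.

Lemma valuation_lt_total {v} : (forall l, is_valuation (v l)) ->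
  forall i S, v i S < 1 + \sum_l v l setT.
Proof.
move=> val_v i S; have [_ [_ mono]] := val_v i.
have rest_ge0 : 0 <= \sum_(l | l != i) v l setT.
  by apply: sumr_ge0 => l _; have [_ []] := val_v l.
have := mono _ _ (subsetT S); rewrite (bigD1 i) //=; lra.
Qed.

Section PinnedBids.
Variables (astar : assignment m n) (c : R).
Hypothesis c_gt0 : 0 < c.

Definition pin_weight (l : 'I_n) (j : 'I_m) : R := if astar j == l then c else 0.
Definition pinned_bids : profile R m n := fun l => additive (pin_weight l).

Lemma pin_weight_ge0 l j : 0 <= pin_weight l j.
Proof. by rewrite /pin_weight; case: ifP => // _; apply: ltW. Qed.

Lemma pin_weight_le l j : pin_weight l j <= c.
Proof. by rewrite /pin_weight; case: ifP => // _; apply: ltW. Qed.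

Lemma GS_pinned l : GS (pinned_bids l).
Proof. exact/GS_additive/pin_weight_ge0. Qed.

Lemma welfare_pinned a : welfare pinned_bids a = \sum_j pin_weight (a j) j.
Proof. exact: sum_over_bundles. Qed.

Lemma welfare_pinned_astar : welfare pinned_bids astar = \sum_(j < m) c.
Proof. by rewrite welfare_pinned; apply: eq_bigr => j _; rewrite /pin_weight eqxx. Qed.

Lemma pinned_max_eq a : welfare pinned_bids astar <= welfare pinned_bids a -> a = astar.
Proof.
rewrite welfare_pinned_astar welfare_pinned => le_a; apply/ffunP => j.
apply/eqP/negPn/negP => ne_j; move: le_a; apply/negP; rewrite -ltNge.
rewrite (bigD1 j) //= [X in _ < X](bigD1 j) //=.
apply: ltr_leD; first by rewrite /pin_weight eq_sym (negbTE ne_j).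
by apply: ler_sum => k _; apply: pin_weight_le.
Qed.

Lemma alloc_pinned alloc : maximizing_rule alloc -> alloc pinned_bids = astar.
Proof. by move=> max_alloc; apply/pinned_max_eq/max_alloc/GS_pinned. Qed.

Lemma W_pinned_le x : W pinned_bids x <= \sum_(j < m) c.
Proof.
apply: W_le => [|f _].
  rewrite big1 => [|l _]; last by rewrite /pinned_bids /additive big_set0.
  by apply: sumr_ge0 => j _; apply: ltW.
rewrite /pinned_bids /additive; under eq_bigr do rewrite big_mkcond.
rewrite exchange_big /=; apply: ler_sum => j _.
apply: le_trans (_ : \sum_l (if l == astar j then c else 0) <= _).
  apply: ler_sum => l _; rewrite /pin_weight eq_sym.
  by case: ifP => _; case: ifP => // _; apply: ltW.
by rewrite -big_mkcond big_pred1_eq.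
Qed.

Lemma marg_pinned j : marg pinned_bids j = 0.
Proof.
apply/eqP; rewrite eq_le marg_ge0 andbT subr_le0.
apply: le_trans (W_pinned_le _) _; rewrite -welfare_pinned_astar.
exact: welfare_le_W_ones.
Qed.

Lemma utility_pinned alloc vi i : maximizing_rule alloc ->
  utility alloc vi pinned_bids i = vi (bundle astar i).
Proof.
move=> max_alloc; rewrite /utility /payment big1 ?subr0 ?alloc_pinned //.
by move=> j _; apply: marg_pinned.
Qed.

Lemma pinned_deviation alloc (vi : valuation R m) i bi :
  maximizing_rule alloc -> is_valuation vi -> (forall S, vi S < c) -> GS bi ->
  utility alloc vi (upd pinned_bids i bi) i <= vi (bundle astar i).
Proof.
move=> max_alloc [_ [vi_ge0 vi_mono]] vi_lt_c GS_bi.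
set b' := upd pinned_bids i bi; set a' := alloc b'.
have GS_b' : forall l, GS (b' l) := GS_upd GS_pinned GS_bi.
have opt_a' := max_alloc b' GS_b'.
have [kept_own|/forallPn[j0]] := boolP [forall j, (a' j == i) ==> (astar j == i)].
  have shrunk : vi (bundle a' i) <= vi (bundle astar i).
    apply/vi_mono/subsetP => j; rewrite !inE => a'j.
    by have /implyP := forallP kept_own j; apply.
  have := payment_ge0 alloc b' i; rewrite /utility -/a'; lra.
rewrite negb_imply => /andP[/eqP a'j0 astar_j0].
have k_out : a' j0 != astar j0 by rewrite a'j0 eq_sym.
have gain_c : c <= marg b' j0.
  have := marg_ge_gain (fun l => (GS_b' l).1) opt_a' k_out.
  rewrite /b' /upd (negbTE astar_j0) additive_setU1; last by rewrite inE.
  by rewrite /pin_weight eqxx.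
have pay_c : c <= payment alloc b' i.
  apply: le_trans gain_c _; rewrite /payment (bigD1 j0) /=; last by rewrite -/a' a'j0.
  by rewrite lerDl sumr_ge0 // => j _; apply: marg_ge0.
have := vi_lt_c (bundle a' i); have := vi_ge0 (bundle astar i); rewrite /utility; lra.
Qed.

End PinnedBids.

End EnglishWalrasian.

Theorem corollary1 (R : realType) (m n : nat)
  (alloc : profile R m n -> assignment m n) :
  maximizing_rule alloc ->
  forall v : profile R m n, (forall i, GS (v i)) ->
  exists b : profile R m n,
    Nash alloc v b /\
    (forall a : assignment m n, welfare v a <= welfare v (alloc b)).
Proof.
move=> max_alloc v GS_v.
have val_v l : is_valuation (v l) := (GS_v l).1.
have [astar opt_astar] := exists_welfare_max v (alloc v).
set c := 1 + \sum_l v l setT.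
have v_lt_c := valuation_lt_total val_v.
have c_gt0 : 0 < c.
  have : 0 <= \sum_l v l setT by apply: sumr_ge0 => l _; have [_ []] := val_v l.
  rewrite /c; lra.
exists (pinned_bids astar c); rewrite alloc_pinned //.
split=> //; split=> [|i bi GS_bi]; first exact: GS_pinned.
by rewrite utility_pinned //; apply: pinned_deviation.
Qed.
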